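(* Let $A$ be a finite alphabet, $b\in A$ a letter, and $u$ a word over $A$ not ending with $b$. If $\vdash^*_{\{u\}}$ is not a well quasi-order on $L^{\epsilon}_{\vdash_{\{u\}}}$, then for every $k\ge1$, $\vdash^*_{\{ub^k\}}$ is not a well quasi-order on $L^{\epsilon}_{\vdash_{\{ub^k\}}}$. Symmetrically (Lemma 9), if $u$ does not begin with $b$ and $\vdash^*_{\{u\}}$ is not a wqo on $L^{\epsilon}_{\vdash_{\{u\}}}$, then for every $k\ge1$, $\vdash^*_{\{b^ku\}}$ is not a wqo on $L^{\epsilon}_{\vdash_{\{b^ku\}}}$.
   Context: For words $u,v$, the shuffle $u \sqcup\!\sqcup v$ is the set of all words $u_1v_1\cdots u_kv_k$ with $k\ge 1$, $u=u_1\cdots u_k$, $v=v_1\cdots v_k$ (pieces possibly empty). For a finite set $I$ of words, $v \vdash_I w$ means $w \in v \sqcup\!\sqcup u$ for some $u\in I$; $\vdash_I^*$ is its reflexive-transitive closure and $L^{\epsilon}_{\vdash_I}=\{w : \epsilon \vdash_I^* w\}$. A quasi-order $\le$ on $S$ is a well quasi-order iff every infinite sequence $s_1,s_2,\dots$ in $S$ has $i<j$ with $s_i\le s_j$. *)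

From mathcomp Require Import all_boot.
Set Implicit Arguments. Unset Strict Implicit. Unset Printing Implicit Defensive.

Section Shuffle.
Variable A : finType.
Definition word := seq A.

Definition shuffle (u v w : word) : Prop :=
  exists (us vs : seq word),
    [/\ 0 < size us, size us = size vs, flatten us = u, flatten vs = v &
        w = flatten [seq p.1 ++ p.2 | p <- zip us vs]].

Definition step (I : seq word) (v w : word) : Prop :=
  exists2 u, u \in I & shuffle v u w.

Inductive derives (I : seq word) : word -> word -> Prop :=
  | derives_refl v : derives I v v
  | derives_step v w x : derives I v w -> step I w x -> derives I v x.

Definition Leps (I : seq word) (w : word) : Prop := derives I [::] w.

End Shuffle.

Definition wqo_on (T : Type) (le : T -> T -> Prop) (S : T -> Prop) : Prop :=
  forall s : nat -> T, (forall n, S (s n)) ->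
    exists i j, (i < j)%N /\ le (s i) (s j).

From mathcomp Require Import all_boot zify.
Set Implicit Arguments. Unset Strict Implicit. Unset Printing Implicit Defensive.

(* Given a bad sequence x_i for |-*_u, pad each x_i into b^(k m_i) x_i, where
   m_i = |x_i|/|u| is the number of insertions producing it; these words lie in
   the language of b^k u.  To transfer a derivation b^(k m) x |-* b^(k n) y back,
   mark the letters coming from b^k and follow them along.  Two invariants
   survive each insertion of b^k u: every prefix made of b's only is fully
   marked (this is where u not beginning with b is used), and unmarked letters
   make up the fraction |u|/(k + |u|) of the word.  At the end they force the
   marked letters to be exactly the leading b^(k n), so erasing them gives
   x |-*_u y.  Appending b^k reduces to prepending it by reversing all words. *)

Section Interleave.
Variable T : Type.
Implicit Types (a c d : seq T) (p q r : pred T).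

Inductive interleave : seq T -> seq T -> seq T -> Prop :=
  | interleave_nil : interleave [::] [::] [::]
  | interleave_consl x a c d : interleave a c d -> interleave (x :: a) c (x :: d)
  | interleave_consr x a c d : interleave a c d -> interleave a (x :: c) (x :: d).

Lemma interleaves0 a : interleave a [::] a.
Proof. by elim: a => [|x a IH]; constructor. Qed.

Lemma interleave0s c : interleave [::] c c.
Proof. by elim: c => [|x c IH]; constructor. Qed.

Lemma interleave_cat a c d a' c' d' :
  interleave a c d -> interleave a' c' d' -> interleave (a ++ a') (c ++ c') (d ++ d').
Proof. by move=> H H'; elim: H => //= *; constructor. Qed.

Lemma interleave_rev a c d : interleave a c d -> interleave (rev a) (rev c) (rev d).
Proof.
elim=> [|x {}a {}c {}d _ IH|x {}a {}c {}d _ IH]; rewrite ?rev_cons -?cats1.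
- exact: interleave_nil.
- by rewrite -[rev c]cats0; apply: interleave_cat IH (interleaves0 _).
- by rewrite -[rev a]cats0; apply: interleave_cat IH (interleave0s _).
Qed.

Lemma interleave_filter p a c d :
  interleave a c d -> interleave (filter p a) (filter p c) (filter p d).
Proof. by elim=> //= [|x *|x *]; [constructor|case: (p x); try constructor..]. Qed.

Lemma interleave_count p a c d : interleave a c d -> count p d = count p a + count p c.
Proof. by elim=> //= *; lia. Qed.

Lemma interleave_size a c d : interleave a c d -> size d = size a + size c.
Proof. by move=> H; rewrite -!count_predT (interleave_count _ H). Qed.

Lemma interleave_all p a c d : interleave a c d -> all p d = all p a && all p c.
Proof. by elim=> //= x {}a {}c {}d _ ->; case: (p x); rewrite ?andbF. Qed.

Lemma interleave_ohead a c d : interleave a c d -> ohead d = ohead a \/ ohead d = ohead c.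
Proof. by case; [left | left | right]. Qed.

Lemma interleave_take a c d n : interleave a c d ->
  exists i j, interleave (take i a) (take j c) (take n d).
Proof.
move=> H; elim: H n => [|x {}a {}c {}d _ IH|x {}a {}c {}d _ IH] [|n];
  try by exists 0, 0; rewrite !take0; constructor.
- by have [i [j Hij]] := IH n; exists i.+1, j; constructor.
- by have [i [j Hij]] := IH n; exists i, j.+1; constructor.
Qed.

Definition prefix_imply q r d := forall n, all q (take n d) -> all r (take n d).

Lemma interleave_prefix_imply q r a c d : interleave a c d ->
  prefix_imply q r a -> prefix_imply q r c -> prefix_imply q r d.
Proof.
move=> H Ha Hc n; have [i [j Hij]] := interleave_take n H.
by rewrite !(interleave_all _ Hij) => /andP[/Ha -> /Hc ->].
Qed.

Lemma interleave_density p a c d : interleave a c d ->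
  count p a * size c = size a * count p c -> count p d * size c = size d * count p c.
Proof. by move=> H; rewrite (interleave_count _ H) (interleave_size H); lia. Qed.

End Interleave.

Section InterleaveMap.
Variables (T U : Type) (f : T -> U).
Implicit Types a c d : seq T.

Lemma interleave_map a c d :
  interleave a c d -> interleave (map f a) (map f c) (map f d).
Proof. by elim=> /= *; constructor. Qed.

Lemma interleave_map_lift a c (d' : seq U) : interleave (map f a) (map f c) d' ->
  exists2 d, map f d = d' & interleave a c d.
Proof.
move Ea: (map f a) => a'; move Ec: (map f c) => c' H.
elim: H a c Ea Ec => [|x {}a' {}c' {}d' _ IH|x {}a' {}c' {}d' _ IH].
- by move=> [|//] [|//] _ _; exists [::]; last constructor.
- move=> [|y a] c //= [<- Ea] Ec; have [d <- Hd] := IH _ _ Ea Ec.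
  by exists (y :: d); last constructor.
- move=> a [|y c] //= Ea [<- Ec]; have [d <- Hd] := IH _ _ Ea Ec.
  by exists (y :: d); last constructor.
Qed.

End InterleaveMap.

Lemma shuffleP (A : finType) (a c d : seq A) : shuffle a c d <-> interleave a c d.
Proof.
split.
- case=> us [vs [_ Hsize <- <- ->]].
  elim: us vs Hsize => [|x us IH] [|y vs] //=; first by constructor.
  case=> /IH H; apply: interleave_cat H.
  by have := interleave_cat (interleaves0 x) (interleave0s y); rewrite cats0.
- elim=> [|x a1 c1 d1 _ [us [vs [H1 H2 H3 H4 H5]]]|x a1 c1 d1 _ [us [vs [H1 H2 H3 H4 H5]]]].
  + by exists [:: [::]], [:: [::]].
  + by exists ([:: x] :: us), ([::] :: vs); split; rewrite //= ?H2 ?H3 ?H4 ?H5.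
  + by exists ([::] :: us), ([:: x] :: vs); split; rewrite //= ?H2 ?H3 ?H4 ?H5.
Qed.

Lemma step1P (A : finType) (v w x : seq A) : step [:: v] w x <-> interleave w v x.
Proof.
split; first by case=> v'; rewrite mem_seq1 => /eqP -> /shuffleP.
by move=> H; exists v; [exact: mem_head | exact/shuffleP].
Qed.

Lemma derives1_inv (A : finType) (P : seq A -> Prop) v x y :
  (forall w z, interleave w v z -> P w -> P z) -> derives [:: v] x y -> P x -> P y.
Proof. by move=> HP; elim=> // x' w z _ IH /step1P /HP Hz /IH. Qed.

Lemma derives1_homo (A B : finType) (phi : seq A -> seq B) (v x y : seq A) :
  (forall a c d, interleave a c d -> interleave (phi a) (phi c) (phi d)) ->
  derives [:: v] x y -> derives [:: phi v] (phi x) (phi y).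
Proof.
move=> Hphi; elim=> [w|w1 w2 w3 _ IH /step1P H]; first exact: derives_refl.
by apply: derives_step IH _; apply/step1P/Hphi.
Qed.

Lemma derives1_map_lift (A B : finType) (f : A -> B) (v x : seq A) (y' : seq B) :
  derives [:: map f v] (map f x) y' -> exists2 y, map f y = y' & derives [:: v] x y.
Proof.
move Ex: (map f x) => x' H; elim: H Ex => [w <-|w1 w2 w3 _ IH /step1P H /IH [y Ey Hy]].
  by exists x; last exact: derives_refl.
rewrite -Ey in H; have [z <- Hz] := interleave_map_lift H.
by exists z; last by apply: derives_step Hy _; apply/step1P.
Qed.

Section Languages.
Variable A : finType.
Implicit Types u v w : seq A.

Lemma Leps_nil w : Leps [:: [::]] w -> w = [::].
Proof.
move=> Hw; apply: (derives1_inv (P := fun x => x = [::]) _ Hw) => // x y H Ex.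
by apply/eqP; rewrite -size_eq0 (interleave_size H) Ex.
Qed.

Lemma Leps_ohead (b : A) u w : ohead u != Some b -> Leps [:: u] w -> ohead w != Some b.
Proof.
move=> Hu Hw; apply: (derives1_inv (P := fun x => ohead x != Some b) _ Hw) => // x y H Hx.
by case: (interleave_ohead H) => ->.
Qed.

Lemma Leps_prefix_power u v w : Leps [:: u] w ->
  exists m, size w = m * size u /\ Leps [:: v ++ u] (flatten (nseq m v) ++ w).
Proof.
rewrite /Leps => H; move E0: (@nil A) => e in H; elim: H E0 => [_ <-|e' x y _ IH Hstep E0].
  by exists 0; split; last exact: derives_refl.
have {Hstep}H := proj1 (step1P _ _ _) Hstep.
have [m [Hx Hd]] := IH E0; exists m.+1.
split; first by rewrite (interleave_size H) Hx mulSn addnC.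
apply: derives_step Hd _; apply/step1P.
rewrite -[flatten _ ++ y]/((v ++ flatten (nseq m v)) ++ y); apply: interleave_cat H.
have := interleave_cat (interleave0s v) (interleaves0 (flatten (nseq m v))).
by rewrite cats0.
Qed.

End Languages.

Definition mark (T : Type) (t : bool) (x : seq T) := [seq (a, t) | a <- x].
Definition unmarked {T : Type} (p : T * bool) := ~~ p.2.
Definition unmark (T : Type) (Z : seq (T * bool)) := map fst (filter unmarked Z).

Section Marking.
Variables (A : eqType) (b : A).
Implicit Types (u x y : seq A) (Z : seq (A * bool)).

Lemma map_fst_mark t x : map fst (mark t x) = x.
Proof. by rewrite -map_comp map_id. Qed.

Lemma unmark_mark t x : unmark (mark t x) = if t then [::] else x.
Proof. by case: t; elim: x => //= a x; rewrite /unmark /= => ->. Qed.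

Lemma size_unmark Z : size (unmark Z) = count unmarked Z.
Proof. by rewrite size_map size_filter. Qed.

Lemma unmark_cat Z1 Z2 : unmark (Z1 ++ Z2) = unmark Z1 ++ unmark Z2.
Proof. by rewrite /unmark filter_cat map_cat. Qed.

Lemma interleave_unmark Z1 Z2 Z3 :
  interleave Z1 Z2 Z3 -> interleave (unmark Z1) (unmark Z2) (unmark Z3).
Proof. by move/(interleave_filter unmarked)/interleave_map; apply. Qed.

Lemma all_snd_mark_true x : all snd (mark true x).
Proof. by rewrite all_map; apply/allP. Qed.

Lemma prefix_imply_padded n x : ohead x != Some b ->
  prefix_imply (preim fst (pred1 b)) snd (mark true (nseq n b) ++ mark false x).
Proof.
move=> Hx i; rewrite take_cat size_map size_nseq.
case: ltnP => _; first by rewrite -map_take all_snd_mark_true.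
rewrite !all_cat all_snd_mark_true /=.
case: x Hx => [|a x] Hax; first by case: (i - n).
case: (i - n) => [|j] //=.
by case/and3P => _ Hab _; move: Hax; rewrite (eqP Hab) eqxx.
Qed.

Lemma unmark_marked Z : all snd Z -> unmark Z = [::].
Proof. by elim: Z => //= -[a t] Z IH /andP[/= -> /IH]. Qed.

Lemma unmark_unmarked Z : all unmarked Z -> unmark Z = map fst Z.
Proof. by move/all_filterP; rewrite /unmark => ->. Qed.

Lemma unmark_padded k n u y Z : 0 < k + size u ->
  prefix_imply (preim fst (pred1 b)) snd Z ->
  count unmarked Z * (k + size u) = size Z * size u ->
  map fst Z = nseq (k * n) b ++ y -> size y = n * size u -> unmark Z = y.
Proof.
move=> Hpos Hpre Hdens HZ Hy.
have Htake : map fst (take (k * n) Z) = nseq (k * n) b.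
  by rewrite map_take HZ take_size_cat ?size_nseq.
have Hdrop : map fst (drop (k * n) Z) = y.
  by rewrite map_drop HZ drop_size_cat ?size_nseq.
have Hmarked : all snd (take (k * n) Z).
  by apply: Hpre; rewrite -(all_map fst (pred1 b)) Htake all_nseq /= eqxx orbT.
have Hsize : size (drop (k * n) Z) = n * size u by rewrite -(size_map fst) Hdrop.
have Hcount : count unmarked Z = count unmarked (drop (k * n) Z).
  by rewrite -{1}(cat_take_drop (k * n) Z) count_cat -size_unmark unmark_marked.
have HsizeZ : size Z = k * n + n * size u.
  by rewrite -(size_map fst) HZ size_cat size_nseq Hy.
have Hunmarked : all unmarked (drop (k * n) Z).
  rewrite all_count Hsize -(eqn_pmul2r Hpos) -Hcount Hdens HsizeZ.
  by apply/eqP; lia.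
by rewrite -(cat_take_drop (k * n) Z) unmark_cat unmark_marked // unmark_unmarked.
Qed.

End Marking.

Lemma derives_unpad (A : finType) (b : A) k m n u x y :
  0 < k + size u -> ohead u != Some b -> ohead x != Some b ->
  size x = m * size u -> size y = n * size u ->
  derives [:: nseq k b ++ u] (nseq (k * m) b ++ x) (nseq (k * n) b ++ y) ->
  derives [:: u] x y.
Proof.
move=> Hpos Hu Hx Hsx Hsy.
pose V := mark true (nseq k b) ++ mark false u.
pose Z := mark true (nseq (k * m) b) ++ mark false x.
have [HfstV HfstZ] : map fst V = nseq k b ++ u /\ map fst Z = nseq (k * m) b ++ x.
  by rewrite !map_cat !map_fst_mark.
have [HunV HunZ] : unmark V = u /\ unmark Z = x by rewrite !unmark_cat !unmark_mark.
rewrite -HfstV -HfstZ => /derives1_map_lift [Z' HZ' HD].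
have Hpre : prefix_imply (preim fst (pred1 b)) snd Z'.
  apply: (derives1_inv (P := prefix_imply (preim fst (pred1 b)) snd) _ HD).
    by move=> W X H HW; apply: (interleave_prefix_imply H HW); exact: prefix_imply_padded.
  exact: prefix_imply_padded.
pose dens (W : seq (A * bool)) := count unmarked W * size V = size W * count unmarked V.
have Hdens : dens Z'.
  apply: (derives1_inv _ HD); first by move=> W X; apply: interleave_density.
  by rewrite /dens -!size_unmark HunV HunZ !size_cat !size_map !size_nseq Hsx; lia.
have HsizeV : size V = k + size u by rewrite size_cat !size_map size_nseq.
rewrite /dens HsizeV -(size_unmark V) HunV in Hdens.
rewrite -HunV -HunZ -(unmark_padded Hpos Hpre Hdens HZ' Hsy).
exact: derives1_homo (@interleave_unmark _) HD.
Qed.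

Lemma flatten_nseq_nseq (T : Type) (x : T) k m :
  flatten (nseq m (nseq k x)) = nseq (k * m) x.
Proof. by elim: m => [|m IH]; rewrite ?muln0 //= IH mulnS nseqD. Qed.

Section WellQuasiOrder.
Variable A : finType.
Implicit Types u : seq A.

Definition derives_wqo u := wqo_on (derives [:: u]) (Leps [:: u]).

Lemma derives_wqo_nil : derives_wqo [::].
Proof.
move=> s Hs; exists 0, 1; split => //.
by rewrite (Leps_nil (Hs 0)) (Leps_nil (Hs 1)); exact: derives_refl.
Qed.

Lemma derives_wqo_rev u : derives_wqo u -> derives_wqo (rev u).
Proof.
have rev_derives v x y : derives [:: v] x y -> derives [:: rev v] (rev x) (rev y).
  exact: derives1_homo (@interleave_rev _).
move=> Hw s Hs.
have Hs' i : Leps [:: u] (rev (s i)) by rewrite -(revK u); exact: rev_derives (Hs i).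
have [i [j [Hij /rev_derives]]] := Hw _ Hs'; rewrite !revK => Hd.
by exists i, j.
Qed.

Lemma derives_wqo_unpad (b : A) k u :
  ohead u != Some b -> derives_wqo (nseq k b ++ u) -> derives_wqo u.
Proof.
have [->|Hne] := eqVneq u [::]; first by move=> _ _; exact: derives_wqo_nil.
have Hu0 : 0 < size u by rewrite lt0n size_eq0.
move=> Hu Hw s Hs; pose m i := size (s i) %/ size u.
have Hpad i : size (s i) = m i * size u /\
              Leps [:: nseq k b ++ u] (nseq (k * m i) b ++ s i).
  have [m' [Hsz HL]] := Leps_prefix_power (nseq k b) (Hs i).
  by rewrite /m Hsz mulnK // -flatten_nseq_nseq.
have [i [j [Hij Hd]]] := Hw _ (fun i => (Hpad i).2).
exists i, j; split => //; apply: derives_unpad Hd; rewrite ?ltn_addl //.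
- exact: Leps_ohead Hu (Hs i).
- exact: (Hpad i).1.
- exact: (Hpad j).1.
Qed.

End WellQuasiOrder.

Theorem lemma8 (A : finType) (b : A) (u : seq A) :
  ((forall v, u <> rcons v b) ->
   ~ wqo_on (derives [:: u]) (Leps [:: u]) ->
   forall k, (1 <= k)%N ->
     ~ wqo_on (derives [:: u ++ nseq k b]) (Leps [:: u ++ nseq k b]))
  /\
  ((forall v, u <> b :: v) ->
   ~ wqo_on (derives [:: u]) (Leps [:: u]) ->
   forall k, (1 <= k)%N ->
     ~ wqo_on (derives [:: nseq k b ++ u]) (Leps [:: nseq k b ++ u])).
Proof.
split=> [Hu Hbad k _ Hw | Hu Hbad k _ Hw]; apply: Hbad.
- rewrite -(revK u); apply: derives_wqo_rev (derives_wqo_unpad (k := k) _ _).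
  + case Eu: (rev u) => [|a v] //=; apply/eqP => -[Eab].
    by apply: (Hu (rev v)); rewrite -[u]revK Eu Eab rev_cons.
  + by have := derives_wqo_rev Hw; rewrite rev_cat rev_nseq.
- apply: derives_wqo_unpad Hw.
  case: u Hu => [|a v] Hu //=.
  by apply/eqP => -[Eab]; apply: (Hu v); rewrite Eab.
Qed.
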